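(* Let $A\in\mathbb{R}^{m\times n}$ be semi-monotone, let $A=P_1-R_1+S_1$ be a double proper weak regular splitting and $A=P_2-R_2+S_2$ a double proper regular splitting of $A$. Suppose $N(S_2)\supseteq N(P_2)$, $R(S_2)\subseteq R(P_2)$, $1\notin\sigma(S_2P_1^{\dagger})$, $\widehat{A}^{\dagger}\geq 0$ where $\widehat{A}=(I-S_2P_1^{\dagger})A$, $P_1^{\dagger}R_1\geq P_2^{\dagger}R_2$ and $P_2^{\dagger}S_2\geq P_1^{\dagger}S_1$. Then $\rho(W_{12})\leq\min\{\rho(T_1),\rho(T_2)\}<1$, where $$W_{12}=\begin{pmatrix} P_2^{\dagger}R_2-P_2^{\dagger}S_2P_1^{\dagger}R_1 & P_2^{\dagger}S_2P_1^{\dagger}S_1\\ I & 0\end{pmatrix},\qquad T_i=\begin{pmatrix} P_i^{\dagger}R_i & -P_i^{\dagger}S_i\\ I&0\end{pmatrix}\ (i=1,2).$$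
   Context: For $M\in\mathbb{R}^{m\times n}$, $M^{\dagger}$ is its Moore–Penrose inverse, $R(M)$, $N(M)$ its range and null space; inequalities are entrywise; $\rho$ is the spectral radius, $\sigma$ the spectrum. $A$ is semi-monotone if $A^{\dagger}\geq 0$. A double splitting $A=P-R+S$ is a double proper splitting if $R(P)=R(A)$ and $N(P)=N(A)$; it is double proper regular if moreover $P^{\dagger}\geq0$, $R\geq0$, $S\leq0$; double proper weak regular if moreover $P^{\dagger}\geq 0$, $P^{\dagger}R\geq 0$, $P^{\dagger}S\leq 0$. *)

From HB Require Import structures.
From mathcomp Require Import all_boot all_order all_algebra.
From mathcomp Require Import reals.
From mathcomp Require Import complex.
Set Implicit Arguments. Unset Strict Implicit. Unset Printing Implicit Defensive.
Import Order.TTheory GRing.Theory Num.Theory.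
Local Open Scope ring_scope.

Section Defs.
Variable R : realType.

Definition mx_le m n (B C : 'M[R]_(m, n)) : Prop := forall i j, B i j <= C i j.
Definition mx_nonneg m n (B : 'M[R]_(m, n)) : Prop := mx_le 0 B.
Definition mx_nonpos m n (B : 'M[R]_(m, n)) : Prop := mx_le B 0.

Definition is_MP m n (M : 'M[R]_(m, n)) (X : 'M[R]_(n, m)) : Prop :=
  [/\ M *m X *m M = M, X *m M *m X = X,
      (M *m X)^T = M *m X & (X *m M)^T = X *m M].

Definition in_range m n (M : 'M[R]_(m, n)) (y : 'cV[R]_m) : Prop :=
  exists x : 'cV[R]_n, y = M *m x.
Definition in_null m n (M : 'M[R]_(m, n)) (x : 'cV[R]_n) : Prop :=
  M *m x = 0.

Definition double_proper_splitting m n (A P Rm S : 'M[R]_(m, n)) : Prop :=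
  [/\ A = P - Rm + S,
      (forall y, in_range P y <-> in_range A y) &
      (forall x, in_null P x <-> in_null A x)].

Definition double_proper_regular m n (A P Rm S : 'M[R]_(m, n))
    (Pd : 'M[R]_(n, m)) : Prop :=
  [/\ double_proper_splitting A P Rm S, is_MP P Pd,
      mx_nonneg Pd, mx_nonneg Rm & mx_nonpos S].

Definition double_proper_weak_regular m n (A P Rm S : 'M[R]_(m, n))
    (Pd : 'M[R]_(n, m)) : Prop :=
  [/\ double_proper_splitting A P Rm S, is_MP P Pd,
      mx_nonneg Pd, mx_nonneg (Pd *m Rm) & mx_nonpos (Pd *m S)].

Definition complexify k (M : 'M[R]_k) : 'M[R[i]]_k := map_mx (fun x => x%:C%C) M.

Definition spectrum k (M : 'M[R]_k) : pred R[i] :=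
  fun z => eigenvalue (complexify M) z.

Definition eigvals k (M : 'M[R]_k) : seq R[i] :=
  sval (closed_field_poly_normal (char_poly (complexify M))).

Definition spectral_radius k (M : 'M[R]_k) : R :=
  \big[Num.max/0]_(z <- eigvals M) Normc.normc z.

End Defs.

(* For a nonnegative square matrix M and t > rho(M), t - M has a nonnegative
   inverse: this holds for large t by row dominance, the set of such t is closed
   because the inverse is the adjugate of X - M at t divided by char_poly M at t,
   and it is open to the left by a Neumann-type perturbation.  Hence rho(M) is a
   root of char_poly M, and dividing the adjugate of X - M by X - rho(M) as long
   as it vanishes at rho(M) produces a nonnegative Perron vector.
   Let y = A^+^T 1 >= 0; a nonnegative row u with u P2^+ y = 0 has u P2^+ = 0.
   For T = [P2^+ B, P2^+ C; I, 0] >= 0, a vector z >= 0 with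
   T z <= lam z - (P2^+ y, 0) then forces rho(T) < lam, by pairing with a left
   Perron vector of T.  The vector z = (A^+ y, A^+ y) gives rho(T2) < 1.  If
   rho(T2) < lam <= 1, then z = (lam - T2)^-1 (P2^+ y, 0) >= 0 satisfies
   W12 z <= lam z - (P2^+ y, 0), so rho(W12) <= rho(T2).  Finally 0 <= T2 <= T1
   gives rho(T2) <= rho(T1). *)

From HB Require Import structures.
From mathcomp Require Import all_boot all_order all_algebra.
From mathcomp Require Import reals.
From mathcomp Require Import complex.
From mathcomp Require Import boolp classical_sets polyrcf.
From mathcomp Require Import ring lra.
Set Implicit Arguments. Unset Strict Implicit. Unset Printing Implicit Defensive.
Import Order.TTheory GRing.Theory Num.Theory.
Local Open Scope ring_scope.

Section EntrywiseOrder.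
Variable R : realType.

Lemma mx_nonnegP m n (B : 'M[R]_(m, n)) : mx_nonneg B <-> forall i j, 0 <= B i j.
Proof. by split=> hB i j; have := hB i j; rewrite mxE. Qed.

Lemma mx_leP m n (B C : 'M[R]_(m, n)) : mx_le B C <-> mx_nonneg (C - B).
Proof. by split=> h i j; have := h i j; rewrite !mxE subr_ge0. Qed.

Lemma mx_nonposN m n (B : 'M[R]_(m, n)) : mx_nonpos B -> mx_nonneg (- B).
Proof. by move=> h i j; have := h i j; rewrite !mxE oppr_ge0. Qed.

Lemma mx_nonneg0 m n : mx_nonneg (0 : 'M[R]_(m, n)).
Proof. by move=> i j. Qed.

Lemma mx_nonneg1 n : mx_nonneg (1%:M : 'M[R]_n).
Proof. by apply/mx_nonnegP => i j; rewrite mxE ler0n. Qed.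

Lemma mx_nonneg_tr m n (B : 'M[R]_(m, n)) : mx_nonneg B -> mx_nonneg B^T.
Proof. by move/mx_nonnegP=> hB; apply/mx_nonnegP => i j; rewrite mxE. Qed.

Lemma mx_nonnegD m n (B C : 'M[R]_(m, n)) :
  mx_nonneg B -> mx_nonneg C -> mx_nonneg (B + C).
Proof.
move=> /mx_nonnegP hB /mx_nonnegP hC; apply/mx_nonnegP => i j.
by rewrite mxE addr_ge0.
Qed.

Lemma mx_nonnegZ m n a (B : 'M[R]_(m, n)) :
  0 <= a -> mx_nonneg B -> mx_nonneg (a *: B).
Proof.
by move=> a0 /mx_nonnegP hB; apply/mx_nonnegP => i j; rewrite mxE mulr_ge0.
Qed.

Lemma mx_nonneg_mul m n p (B : 'M[R]_(m, n)) (C : 'M[R]_(n, p)) :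
  mx_nonneg B -> mx_nonneg C -> mx_nonneg (B *m C).
Proof.
move=> /mx_nonnegP hB /mx_nonnegP hC; apply/mx_nonnegP => i j.
by rewrite mxE sumr_ge0 // => l _; rewrite mulr_ge0.
Qed.

Lemma mx_nonneg_col m1 m2 n (B : 'M[R]_(m1, n)) (C : 'M[R]_(m2, n)) :
  mx_nonneg B -> mx_nonneg C -> mx_nonneg (col_mx B C).
Proof.
move=> /mx_nonnegP hB /mx_nonnegP hC; apply/mx_nonnegP => i j.
by case: (split_ordP i) => i' ->; rewrite ?col_mxEu ?col_mxEd.
Qed.

Lemma mx_nonneg_block m1 m2 n1 n2 (Bul : 'M[R]_(m1, n1)) (Bur : 'M[R]_(m1, n2))
    (Bdl : 'M[R]_(m2, n1)) (Bdr : 'M[R]_(m2, n2)) :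
  mx_nonneg Bul -> mx_nonneg Bur -> mx_nonneg Bdl -> mx_nonneg Bdr ->
  mx_nonneg (block_mx Bul Bur Bdl Bdr).
Proof.
move=> /mx_nonnegP hul /mx_nonnegP hur /mx_nonnegP hdl /mx_nonnegP hdr.
apply/mx_nonnegP => i j.
case: (split_ordP i) => i' ->; case: (split_ordP j) => j' ->.
all: by rewrite ?block_mxEul ?block_mxEur ?block_mxEdl ?block_mxEdr.
Qed.

Lemma mx_nonneg_nonpos_eq0 m n (B : 'M[R]_(m, n)) :
  mx_nonneg B -> mx_nonpos B -> B = 0.
Proof.
move=> /mx_nonnegP h1 h2; apply/matrixP => i j; have := h2 i j; rewrite !mxE.
by move=> h; apply/eqP; rewrite eq_le h h1.
Qed.

Lemma mx_le_mul2l m n p (N : 'M[R]_(m, n)) (B C : 'M[R]_(n, p)) :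
  mx_nonneg N -> mx_le B C -> mx_le (N *m B) (N *m C).
Proof. by move=> hN /mx_leP hBC; apply/mx_leP; rewrite -mulmxBr; apply: mx_nonneg_mul. Qed.

Lemma mx_le_mul2r m n p (N : 'M[R]_(n, p)) (B C : 'M[R]_(m, n)) :
  mx_nonneg N -> mx_le B C -> mx_le (B *m N) (C *m N).
Proof. by move=> hN /mx_leP hBC; apply/mx_leP; rewrite -mulmxBl; apply: mx_nonneg_mul. Qed.

Lemma mx_nonneg_rowsum_eq0 m n (B : 'M[R]_(m, n)) :
  mx_nonneg B -> B *m (const_mx 1 : 'cV_n) = 0 -> B = 0.
Proof.
move=> /mx_nonnegP hB /matrixP hB1; apply/matrixP => i j; apply/eqP; rewrite mxE.
have /eqP := hB1 i 0; rewrite !mxE; under eq_bigr do rewrite mxE mulr1.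
by rewrite psumr_eq0 // => /allP/(_ j (mem_index_enum _)).
Qed.

End EntrywiseOrder.

Section SpectralRadius.
Variables (R : realType) (k : nat).
Implicit Types (M : 'M[R]_k).

Lemma eigvalsE M : char_poly (complexify M) = \prod_(z <- eigvals M) ('X - z%:P).
Proof.
rewrite /eigvals; case: closed_field_poly_normal => s /= ->.
by rewrite (monicP (char_poly_monic _)) scale1r.
Qed.

Lemma mem_eigvals M z : (z \in eigvals M) = eigenvalue (complexify M) z.
Proof. by rewrite eigenvalue_root_char eigvalsE root_prod_XsubC. Qed.

Lemma size_eigvals M : size (eigvals M) = k.
Proof.
by have := size_char_poly (complexify M); rewrite eigvalsE size_prod_XsubC => -[].
Qed.

Lemma normc_ge0 (z : R[i]) : 0 <= Normc.normc z.
Proof. by rewrite -lecR; exact: (normr_ge0 z). Qed.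

Lemma spectral_radius_ge0 M : 0 <= spectral_radius M.
Proof.
by rewrite /spectral_radius; elim/big_rec: _ => // z r _ h; rewrite le_max h orbT.
Qed.

Lemma normc_le_spectral_radius M z :
  z \in eigvals M -> Normc.normc z <= spectral_radius M.
Proof. by move=> zM; exact: le_bigmax_seq. Qed.

Lemma spectral_radius_attained M : (0 < k)%N ->
  exists2 z, z \in eigvals M & Normc.normc z = spectral_radius M.
Proof.
move=> k0; have : eigvals M != [::] by rewrite -size_eq0 size_eigvals -lt0n.
rewrite /spectral_radius; elim: (eigvals M) => [|y s IH] // _; rewrite big_cons.
case: s IH => [|y' s] IH.
  by exists y; rewrite ?mem_head // big_nil max_l ?normc_ge0.
have [le|lt] := leP (Normc.normc y) (\big[Num.max/0]_(z <- y' :: s) Normc.normc z).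
  by have [z zs e] := IH isT; exists z; rewrite ?max_r // inE zs orbT.
by exists y; rewrite ?mem_head // max_l // ltW.
Qed.

Lemma spectral_radius_gt0_dim M : 0 < spectral_radius M -> (0 < k)%N.
Proof.
move: (size_eigvals M); rewrite /spectral_radius.
by case: (eigvals M) => [_|z s <- _ //]; rewrite big_nil ltxx.
Qed.

Lemma spectral_radius_tr M : spectral_radius M^T = spectral_radius M.
Proof.
suff e : char_poly (complexify M^T) = char_poly (complexify M).
  by rewrite /spectral_radius /eigvals e.
rewrite /complexify -map_trmx /char_poly /char_poly_mx -det_tr.
by congr (\det _); apply/matrixP => i j; rewrite !mxE eq_sym.
Qed.

Lemma normc_real (a : R) : Normc.normc (a%:C)%C = `|a|.
Proof. by rewrite /Normc.normc /= expr0n /= addr0 sqrtr_sqr. Qed.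

Lemma real_root_le_spectral_radius M t :
  root (char_poly M) t -> `|t| <= spectral_radius M.
Proof.
move=> rt; rewrite -normc_real; apply: normc_le_spectral_radius.
rewrite mem_eigvals eigenvalue_root_char.
rewrite [complexify M](_ : _ = map_mx (real_complex R) M) // -map_char_poly.
by apply/rootP; rewrite horner_map (rootP rt) rmorph0.
Qed.

Lemma char_poly_gt0 M t : spectral_radius M < t -> 0 < (char_poly M).[t].
Proof.
move=> lt; set p := char_poly M.
have lc1 : lead_coef p = 1 by apply/monicP/char_poly_monic.
have [b0 hb0] : exists b0, forall x, b0 <= x -> lead_coef p <= p.[x].
  by apply: poly_pinfty_gt_lc; rewrite lc1.
set b := Num.max t b0; have tb : t <= b by rewrite le_max lexx.
have pb : 0 < p.[b].
  by apply: lt_le_trans (hb0 _ _); rewrite ?lc1 ?ltr01 ?le_max ?lexx ?orbT.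
rewrite ltNge; apply/negP => pt.
have [x /andP[tx _] rx] : exists2 x, t <= x <= b & root p x.
  by apply: poly_ivt; rewrite // pt ltW.
have := le_trans (ler_norm x) (real_root_le_spectral_radius rx).
by rewrite leNgt (lt_le_trans lt tx).
Qed.

End SpectralRadius.

Section MonotoneMatrices.
Variables (R : realType) (k : nat).
Implicit Types (B M N : 'M[R]_k).

Definition monotone_mx B := forall x : 'cV[R]_k, mx_nonneg (B *m x) -> mx_nonneg x.

Lemma monotone_mxP B : monotone_mx B <-> B \in unitmx /\ mx_nonneg (invmx B).
Proof.
split=> [hB|[uB hinv] x hx]; last first.
  by rewrite -[x]mul1mx -(mulVmx uB) -mulmxA; apply: mx_nonneg_mul.
have uB : B \in unitmx.
  rewrite unitmxE unitfE -det_tr; apply/negP => /det0P[v v0].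
  move/(congr1 trmx); rewrite trmx_mul trmxK trmx0 => hv.
  have hv0 : mx_nonneg v^T by apply: hB; rewrite hv.
  have hvN : mx_nonneg (- v^T) by apply: hB; rewrite mulmxN hv oppr0.
  move/negP: v0; apply; rewrite -[v]trmxK (@mx_nonneg_nonpos_eq0 _ _ _ v^T) ?trmx0 //.
  by move=> i j; have := hvN i j; rewrite !mxE oppr_ge0.
split=> //; apply/mx_nonnegP => i j.
have /mx_nonnegP/(_ i 0) : mx_nonneg (col j (invmx B)).
  apply: hB; rewrite colE mulmxA mulmxV // mul1mx; apply/mx_nonnegP => l l'.
  by rewrite mxE; case: (_ && _).
by rewrite mxE.
Qed.

Lemma monotone_mx_tr B : monotone_mx B -> monotone_mx B^T.
Proof.
move=> /monotone_mxP[uB hinv]; apply/monotone_mxP.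
by rewrite unitmx_tr -trmx_inv; split=> //; apply: mx_nonneg_tr.
Qed.

Lemma monotone_mx_nonpos_eq0 B (x : 'cV[R]_k) :
  monotone_mx B -> mx_nonneg x -> mx_nonpos (B *m x) -> x = 0.
Proof.
move=> hB x0 hBx; apply: mx_nonneg_nonpos_eq0 => // i j.
have /mx_nonnegP/(_ i j) : mx_nonneg (- x).
  by apply: hB; rewrite mulmxN; apply: mx_nonposN.
by rewrite !mxE oppr_ge0.
Qed.

Lemma row_dominant_monotone N c :
  mx_nonneg N -> (forall i, \sum_j N i j < c) -> monotone_mx (c%:M - N).
Proof.
move=> /mx_nonnegP hN rowN x /mx_nonnegP hx; apply/mx_nonnegP => i j.
rewrite (ord1 j) leNgt; apply/negP => xi.
have [j0 _ min_j0] := arg_minP (fun l => x l 0) (isT : predT i).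
have xj0 : x j0 0 < 0 by apply: le_lt_trans xi; exact: min_j0.
have := hx j0 0; rewrite mulmxBl mul_scalar_mx !mxE subr_ge0 leNgt => /negP; apply.
apply: lt_le_trans (_ : (\sum_l N j0 l) * x j0 0 <= _).
  by rewrite ltr_nM2r.
rewrite mulr_suml; apply: ler_sum => l _; apply: ler_wpM2l => //; exact: min_j0.
Qed.

End MonotoneMatrices.


Lemma poly_ge0_of_gt (R : rcfType) (q : {poly R}) t0 :
  (forall t, t0 < t -> 0 <= q.[t]) -> 0 <= q.[t0].
Proof.
move=> hq; rewrite leNgt; apply/negP => qt0.
have [d d0 hd] : exists2 d, 0 < d & forall t, `|t - t0| < d -> `|q.[t] - q.[t0]| < - q.[t0].
  by apply: poly_cont; rewrite oppr_gt0.
have d2 : 0 < d / 2 by rewrite divr_gt0.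
have /hd : `|t0 + d / 2 - t0| < d.
  by rewrite addrAC subrr add0r ger0_norm ?ltW // ltr_pdivrMr // ltr_pMr // ltr1n.
have := hq (t0 + d / 2); rewrite ltrDl => /(_ d2) qt.
move=> /(le_lt_trans (ler_norm _)); rewrite ltrBlDr addNr.
by rewrite ltNge qt.
Qed.

Section Resolvent.
Variables (R : realType) (k : nat) (M : 'M[R]_k).

Lemma eval_char_poly_mx t : map_mx (horner_eval t) (char_poly_mx M) = t%:M - M.
Proof.
apply/matrixP => i j; rewrite !mxE /= horner_evalE.
by rewrite hornerD hornerN hornerMn hornerX hornerC.
Qed.

Lemma horner_char_poly t : (char_poly M).[t] = \det (t%:M - M).
Proof. by rewrite /char_poly -horner_evalE -det_map_mx eval_char_poly_mx. Qed.

Lemma invmx_resolvent t : (char_poly M).[t] != 0 ->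
  invmx (t%:M - M) =
  ((char_poly M).[t])^-1 *: map_mx (horner_eval t) (\adj (char_poly_mx M)).
Proof.
by rewrite map_mx_adj eval_char_poly_mx horner_char_poly /invmx unitmxE unitfE => ->.
Qed.

Lemma resolvent_monotone_limit t0 :
  spectral_radius M <= t0 -> (char_poly M).[t0] != 0 ->
  (forall t, t0 < t -> monotone_mx (t%:M - M)) -> monotone_mx (t0%:M - M).
Proof.
move=> rho_t0 chi0 ht; have chi_gt0 t : t0 < t -> 0 < (char_poly M).[t].
  by move=> lt; apply: char_poly_gt0; apply: le_lt_trans lt.
have chi_t0 : 0 < (char_poly M).[t0].
  by rewrite lt_def chi0 poly_ge0_of_gt // => t /chi_gt0/ltW.
apply/monotone_mxP; split; first by rewrite unitmxE unitfE -horner_char_poly gt_eqF.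
apply/mx_nonnegP => i j; rewrite invmx_resolvent ?gt_eqF // !mxE /= horner_evalE.
rewrite mulr_ge0 ?invr_ge0 ?(ltW chi_t0) //; apply: poly_ge0_of_gt => t lt.
have /monotone_mxP[_ /mx_nonnegP/(_ i j)] := ht t lt.
rewrite invmx_resolvent ?gt_eqF ?chi_gt0 // !mxE /= horner_evalE.
by rewrite pmulr_rge0 ?invr_gt0 ?chi_gt0.
Qed.

Lemma resolvent_monotone_left t0 : monotone_mx (t0%:M - M) ->
  exists2 d, 0 < d & forall t, t0 - d < t -> t <= t0 -> monotone_mx (t%:M - M).
Proof.
move=> /monotone_mxP[u0 hN0]; set N0 := invmx _ in hN0.
set s := \sum_i \sum_j N0 i j.
have /mx_nonnegP N0_ge0 := hN0.
have rowsum_ge0 i : 0 <= \sum_j N0 i j by apply: sumr_ge0.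
have s_ge0 : 0 <= s by apply: sumr_ge0.
have rowN0 i : \sum_j N0 i j <= s.
  by rewrite [leRHS](bigD1 i) //= lerDl sumr_ge0.
exists (s + 1)^-1 => [|t lt le x hx]; first by rewrite invr_gt0 ltr_wpDl.
set d := t0 - t; have d_ge0 : 0 <= d by rewrite subr_ge0.
have ds : d * (s + 1) < 1 by rewrite -ltr_pdivlMr ?ltr_wpDl // div1r ltrBlDr -ltrBlDl.
have dom : monotone_mx (1%:M - d *: N0).
  apply: row_dominant_monotone => [|i]; first exact: mx_nonnegZ.
  under eq_bigr do rewrite mxE; rewrite -mulr_sumr; apply: le_lt_trans ds.
  by rewrite ler_wpM2l // (le_trans (rowN0 i)) // lerDl.
apply: dom; suff -> : (1%:M - d *: N0) *m x = N0 *m ((t%:M - M) *m x).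
  exact: mx_nonneg_mul.
have -> : t%:M - M = (t0%:M - M) - d%:M.
  by apply/matrixP => i j; rewrite !mxE mulrnBl; ring.
by rewrite mulmxA mulmxBr mulVmx // mul_mx_scalar.
Qed.

Lemma resolvent_monotone t :
  mx_nonneg M -> spectral_radius M < t -> monotone_mx (t%:M - M).
Proof.
move=> hM rho_t; apply: contrapT => not_t.
have /mx_nonnegP M_ge0 := hM.
set c := \sum_i \sum_j M i j + 1.
have large s : c <= s -> monotone_mx (s%:M - M).
  move=> cs; apply: row_dominant_monotone => // i; apply: lt_le_trans cs.
  apply: le_lt_trans (_ : _ <= \sum_i \sum_j M i j) _; last by rewrite ltrDl.
  rewrite [leRHS](bigD1 i) //= lerDl.
  by apply: sumr_ge0 => l _; apply: sumr_ge0.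
(* Monotonicity holds at the supremum of the points >= t where it fails, by
   [resolvent_monotone_limit], and then slightly to its left. *)
pose E := [set s : R | t <= s /\ ~ monotone_mx (s%:M - M)]%classic.
have hE : has_sup E.
  split; first by exists t.
  by exists c => s [_ ns]; rewrite leNgt; apply/negP => /ltW /large.
have tS : t <= sup E by exact: sup_upper_bound.
have mono_gt s : sup E < s -> monotone_mx (s%:M - M).
  move=> lt; apply: contrapT => ns.
  by have := sup_upper_bound hE (conj (le_trans tS (ltW lt)) ns); rewrite leNgt lt.
have rho_S := lt_le_trans rho_t tS.
have /resolvent_monotone_left[d d0 hd] : monotone_mx ((sup E)%:M - M).
  by apply: resolvent_monotone_limit; rewrite ?ltW ?gt_eqF ?char_poly_gt0.
have [e Ee lt_e] := sup_adherent d0 hE.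
by case: (Ee) => _; apply; apply: hd lt_e (sup_upper_bound hE Ee).
Qed.

End Resolvent.


Lemma scalemx_eq_scalar_mx (D : idomainType) n (i0 : 'I_n) (a b : D) (Q : 'M[D]_n) :
  a != 0 -> a *: Q = b%:M -> Q = (Q i0 i0)%:M /\ b = a * Q i0 i0.
Proof.
move=> a0 /matrixP hQ; have b_def : b = a * Q i0 i0.
  by have := hQ i0 i0; rewrite !mxE eqxx mulr1n.
split=> //; apply/matrixP => i j; apply: (mulfI a0); have := hQ i j.
by rewrite !mxE b_def => ->; case: (i == j); rewrite ?mulr1n ?mulr0n ?mulr0.
Qed.

Lemma eval_mx_eq0_factor (F : fieldType) m n (B : 'M[{poly F}]_(m, n)) r :
  map_mx (horner_eval r) B = 0 ->
  B = ('X - r%:P) *: map_mx (fun p => p %/ ('X - r%:P)) B.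
Proof.
move=> /matrixP hB; apply/matrixP => i j; rewrite !mxE mulrC divpK //.
by rewrite dvdp_XsubCl; have := hB i j; rewrite !mxE /= horner_evalE => /eqP.
Qed.

Section PerronFrobenius.
Variables (R : realType) (k : nat) (M : 'M[R]_k).
Hypothesis M_ge0 : mx_nonneg M.

Lemma normc_eigvec_le (z : R[i]) (v : 'rV[R[i]]_k) j :
  v *m complexify M = z *: v ->
  Normc.normc z * Normc.normc (v 0 j) <= ((\row_l Normc.normc (v 0 l)) *m M) 0 j.
Proof.
move=> hv; have /mx_nonnegP hM := M_ge0.
rewrite mxE; under eq_bigr do rewrite mxE.
rewrite -lecR rmorphM rmorph_sum /=.
change (`|z| * `|v 0 j| <= \sum_i ((Normc.normc (v 0 i) * M i j)%:C)%C).
rewrite -normrM; have -> : z * v 0 j = \sum_i v 0 i * (M i j)%:C%C.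
  by move/matrixP/(_ 0 j): hv; rewrite !mxE => <-; apply: eq_bigr => i _; rewrite mxE.
apply: le_trans (ler_norm_sum _ _ _) _; apply: ler_sum => i _.
by rewrite normrM rmorphM /= [`|(M i j)%:C%C|]ger0_norm ?lecR.
Qed.

Lemma eigval_lt_of_monotone t z :
  monotone_mx (t%:M - M) -> z \in eigvals M -> Normc.normc z < t.
Proof.
move=> ht; rewrite mem_eigvals => /eigenvalueP[v hv v0].
(* w = |v| satisfies |z| w <= w M, so w (t - M) <= 0 if t <= |z|. *)
pose w := \row_j Normc.normc (v 0 j).
have w_ge0 : mx_nonneg w by apply/mx_nonnegP => i j; rewrite mxE normc_ge0.
rewrite ltNge; apply/negP => tz.
suff /matrixP w0 : w^T = 0.
  move/eqP: v0; apply; apply/matrixP => i j; rewrite (ord1 i) mxE.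
  by apply: Normc.eq0_normc; have := w0 j 0; rewrite !mxE.
apply: monotone_mx_nonpos_eq0 (monotone_mx_tr ht) (mx_nonneg_tr w_ge0) _ => i j.
rewrite -trmx_mul mxE mulmxBr mul_mx_scalar (ord1 j) mxE.
rewrite [(t *: w) 0 i]mxE [(- (w *m M)) 0 i]mxE [(0 : 'M_(k, 1)) i 0]mxE subr_le0.
apply: le_trans (normc_eigvec_le i hv); rewrite mxE.
by rewrite ler_wpM2r ?normc_ge0.
Qed.

Lemma root_char_poly_spectral_radius : (0 < k)%N ->
  root (char_poly M) (spectral_radius M).
Proof.
move=> k0; apply: contraT => chi0.
have mono : monotone_mx ((spectral_radius M)%:M - M).
  apply: resolvent_monotone_limit => // t; exact: resolvent_monotone.
have [z zM rho_z] := spectral_radius_attained M k0.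
by have := eigval_lt_of_monotone mono zM; rewrite rho_z ltxx.
Qed.

Lemma nonneg_eigvec_of_poly_mx r (i0 : 'I_k) : root (char_poly M) r ->
  forall (B : 'M[{poly R}]_k) q, q != 0 -> char_poly_mx M *m B = q%:M ->
  (forall t, r < t -> mx_nonneg (map_mx (horner_eval t) B)) ->
  exists u : 'cV[R]_k, [/\ mx_nonneg u, u != 0 & M *m u = r *: u].
Proof.
(* Divide B by X - r while it vanishes at r, which lowers size q; otherwise the
   nonzero columns of B at r are the eigenvectors, as q(r) = 0. *)
move=> rr B q; have [n] := ubnP (size q); elim: n B q => // n IH B q szq q0 hB hpos.
set Br := map_mx (horner_eval r) B.
have [Br0|Br_neq0] := eqVneq Br 0.
  have eB := eval_mx_eq0_factor Br0; set B' := map_mx _ B in eB.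
  have [eQ eq] : let Q := char_poly_mx M *m B' in
      Q = (Q i0 i0)%:M /\ q = ('X - r%:P) * Q i0 i0.
    by apply: scalemx_eq_scalar_mx; rewrite ?polyXsubC_eq0 // scalemxAr -eB.
  have q'0 : (char_poly_mx M *m B') i0 i0 != 0.
    by apply: contraNneq q0 => e; rewrite eq e mulr0.
  apply: (IH B' _ _ q'0 eQ).
    by move: szq; rewrite eq size_mul ?polyXsubC_eq0 // size_XsubC.
  move=> t lt; apply/mx_nonnegP => i j; have /mx_nonnegP/(_ i j) := hpos t lt.
  rewrite eB !mxE /= !horner_evalE hornerM hornerXsubC pmulr_rge0 //.
  by rewrite subr_gt0.
have Br_ge0 : mx_nonneg Br.
  apply/mx_nonnegP => i j; rewrite mxE /= horner_evalE; apply: poly_ge0_of_gt => t lt.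
  by have /mx_nonnegP/(_ i j) := hpos t lt; rewrite mxE.
have hBr : (r%:M - M) *m Br = (q.[r])%:M.
  by rewrite -eval_char_poly_mx -map_mxM hB map_scalar_mx /= horner_evalE.
have qr0 : q.[r] = 0.
  apply: contraTeq rr => qr0; rewrite /root horner_char_poly -unitfE -unitmxE.
  have /mulmx1_unit[] // : (r%:M - M) *m (q.[r]^-1 *: Br) = 1%:M.
  by rewrite -scalemxAr hBr scale_scalar_mx mulVf.
have [j Brj] : exists j, col j Br != 0.
  apply/existsP; apply: contraNT Br_neq0 => /existsPn h; apply/eqP/matrixP => i j.
  by have /negPn/eqP/matrixP/(_ i 0) := h j; rewrite !mxE.
exists (col j Br); split=> //.
  by apply/mx_nonnegP => i l; rewrite mxE; have /mx_nonnegP := Br_ge0; apply.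
have : (r%:M - M) *m col j Br = 0.
  by rewrite colE mulmxA hBr qr0 mul_scalar_mx scale0r.
by rewrite mulmxBl mul_scalar_mx => /eqP; rewrite subr_eq0 => /eqP <-.
Qed.

Theorem perron_vector : (0 < k)%N ->
  exists u : 'cV[R]_k, [/\ mx_nonneg u, u != 0 & M *m u = spectral_radius M *: u].
Proof.
move=> k0; apply: (nonneg_eigvec_of_poly_mx (Ordinal k0) (root_char_poly_spectral_radius k0)
  (monic_neq0 (char_poly_monic M)) (mul_mx_adj _)) => t lt.
have chi_t := char_poly_gt0 lt.
have /monotone_mxP[_] := resolvent_monotone M_ge0 lt.
rewrite invmx_resolvent ?gt_eqF // => /mx_nonnegP h; apply/mx_nonnegP => i j.
by have := h i j; rewrite mxE pmulr_rge0 ?invr_gt0.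
Qed.

Lemma le_spectral_radius (z : 'cV[R]_k) a :
  mx_nonneg z -> z != 0 -> mx_le (a *: z) (M *m z) -> a <= spectral_radius M.
Proof.
move=> z_ge0 z0 hz; rewrite leNgt; apply/negP => lt.
move/eqP: z0; apply; apply: monotone_mx_nonpos_eq0 (resolvent_monotone M_ge0 lt) z_ge0 _.
by move=> i j; have := hz i j; rewrite mulmxBl mul_scalar_mx !mxE subr_le0.
Qed.

End PerronFrobenius.

Lemma spectral_radius_mono (R : realType) k (B C : 'M[R]_k) :
  mx_nonneg B -> mx_le B C -> spectral_radius B <= spectral_radius C.
Proof.
move=> B_ge0 BC.
have [/spectral_radius_gt0_dim k0|] := ltP 0 (spectral_radius B); last first.
  by move/le_trans; apply; apply: spectral_radius_ge0.
have C_ge0 : mx_nonneg C.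
  by rewrite -[C](subrK B); apply: mx_nonnegD B_ge0; move/mx_leP: BC.
have [u [u_ge0 u0 hu]] := perron_vector B_ge0 k0.
by apply: (le_spectral_radius C_ge0 u_ge0 u0); rewrite -hu; apply: mx_le_mul2r.
Qed.

Lemma perron_left_vector_pairing (R : realType) k (M : 'M[R]_k) (z c : 'cV[R]_k) lam :
  mx_nonneg M -> mx_nonneg z -> mx_nonneg c -> 0 < lam -> lam <= spectral_radius M ->
  mx_le (M *m z) (lam *: z - c) ->
  exists w : 'rV[R]_k,
    [/\ mx_nonneg w, w != 0, w *m M = spectral_radius M *: w & w *m c = 0].
Proof.
move=> M_ge0 z_ge0 c_ge0 lam0 lam_rho hz.
have k0 := spectral_radius_gt0_dim (lt_le_trans lam0 lam_rho).
have [v [v_ge0 v0 hv]] := perron_vector (mx_nonneg_tr M_ge0) k0.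
have w_ge0 := mx_nonneg_tr v_ge0.
have hw : v^T *m M = spectral_radius M *: v^T.
  by rewrite -[M]trmxK -trmx_mul hv -spectral_radius_tr linearZ.
exists v^T; split=> //; first by rewrite trmx_eq0.
have e0 : (v^T *m c) 0 0 = 0.
  have := mx_le_mul2l w_ge0 hz 0 0; rewrite mulmxA hw -scalemxAl mulmxBr -scalemxAr.
  have /mx_nonnegP/(_ 0 0) := mx_nonneg_mul w_ge0 z_ge0.
  have /mx_nonnegP/(_ 0 0) := mx_nonneg_mul w_ge0 c_ge0.
  move: (v^T *m z) (v^T *m c) => S E e_ge0 s_ge0; rewrite !mxE => hs.
  apply/eqP; rewrite eq_le e_ge0 andbT.
  apply: le_trans (_ : _ <= (lam - spectral_radius M) * S 0 0) _.
    by rewrite mulrBl; lra.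
  by rewrite mulr_le0_ge0 // subr_le0.
by apply/matrixP => i j; rewrite !ord1 [RHS]mxE.
Qed.

Section MoorePenrose.
Variable R : realType.

Lemma col_mx_eq m n (A B : 'M[R]_(m, n)) : (forall j, col j A = col j B) -> A = B.
Proof. by move=> h; apply/matrixP => i j; exact: col_eq (h j) i. Qed.

Lemma range_proj_id m n p (P : 'M[R]_(m, n)) (Pd : 'M[R]_(n, m)) (S : 'M[R]_(m, p)) :
  P *m Pd *m P = P -> (forall y, in_range S y -> in_range P y) -> P *m Pd *m S = S.
Proof.
move=> hP hS; apply: col_mx_eq => j; rewrite !colE -mulmxA.
have [|x ->] := hS (S *m delta_mx j 0); first by exists (delta_mx j 0).
by rewrite mulmxA hP.
Qed.

Lemma null_proj_id m n p (M : 'M[R]_(p, n)) (N : 'M[R]_(m, n)) (Nd : 'M[R]_(n, m)) :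
  N *m Nd *m N = N -> (forall x, in_null N x -> in_null M x) -> M *m (Nd *m N) = M.
Proof.
move=> hN hM; apply/eqP; rewrite -subr_eq0 -{2}[M]mulmx1 -mulmxBr; apply/eqP.
apply: col_mx_eq => j; rewrite col0 colE -mulmxA; apply: hM.
by rewrite /in_null mulmxA mulmxBr mulmx1 mulmxA hN subrr mul0mx.
Qed.

Lemma sym_proj_eq n (P Q : 'M[R]_n) :
  P^T = P -> Q^T = Q -> Q *m P = P -> P *m Q = Q -> P = Q.
Proof. by move=> sP sQ QP PQ; rewrite -sP -QP trmx_mul sP sQ PQ. Qed.

Lemma MP_mulmx_range m n (M N : 'M[R]_(m, n)) Md Nd : is_MP M Md -> is_MP N Nd ->
  (forall y, in_range M y <-> in_range N y) -> M *m Md = N *m Nd.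
Proof.
move=> [hM _ sM _] [hN _ sN _] hMN; apply: sym_proj_eq => //.
- by rewrite mulmxA (range_proj_id hN) // => y /hMN.
- by rewrite mulmxA (range_proj_id hM) // => y /hMN.
Qed.

Lemma MP_mulmx_null m n (M N : 'M[R]_(m, n)) Md Nd : is_MP M Md -> is_MP N Nd ->
  (forall x, in_null M x <-> in_null N x) -> Md *m M = Nd *m N.
Proof.
move=> [hM _ _ sM] [hN _ _ sN] hMN; apply: sym_proj_eq => //.
- rewrite -[LHS]trmxK trmx_mul sM sN (null_proj_id hN) // => x /hMN hx.
  by rewrite /in_null -mulmxA hx mulmx0.
- rewrite -[LHS]trmxK trmx_mul sM sN (null_proj_id hM) // => x /hMN hx.
  by rewrite /in_null -mulmxA hx mulmx0.
Qed.

End MoorePenrose.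

Lemma companion_mul_col (R : realType) n (X Y : 'M[R]_n) (a b : 'cV[R]_n) :
  block_mx X Y 1%:M 0 *m col_mx a b = col_mx (X *m a + Y *m b) a.
Proof. by rewrite mul_block_col mul1mx mul0mx addr0. Qed.

Section CompanionBlock.
Variables (R : realType) (n m : nat) (P : 'M[R]_(n, m)) (B C : 'M[R]_(m, n)).

Lemma companion_left_eigvec_eq0 (w1 w2 : 'rV[R]_n) r : r != 0 -> w1 *m P = 0 ->
  row_mx w1 w2 *m block_mx (P *m B) (P *m C) 1%:M 0 = r *: row_mx w1 w2 ->
  row_mx w1 w2 = 0.
Proof.
move=> r0 w1P; rewrite mul_row_block !mulmxA w1P !mul0mx !add0r mulmx1 mulmx0.
rewrite scale_row_mx => /eq_row_mx[e1 /esym/eqP].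
rewrite scaler_eq0 (negbTE r0) /= => /eqP w2_0; move: e1; rewrite w2_0 => /esym/eqP.
by rewrite scaler_eq0 (negbTE r0) /= => /eqP ->; rewrite row_mx0.
Qed.

Lemma companion_spectral_radius_lt (y : 'cV[R]_m) (z : 'cV[R]_(n + n)) lam :
  let T := block_mx (P *m B) (P *m C) 1%:M 0 in
  mx_nonneg T -> mx_nonneg z -> mx_nonneg (P *m y) -> 0 < lam ->
  (forall u : 'rV[R]_n, mx_nonneg u -> u *m P *m y = 0 -> u *m P = 0) ->
  mx_le (T *m z) (lam *: z - col_mx (P *m y) 0) ->
  spectral_radius T < lam.
Proof.
move=> T T_ge0 z_ge0 Py_ge0 lam0 Py_eq0 hz; rewrite ltNge; apply/negP => lam_rho.
have c_ge0 : mx_nonneg (col_mx (P *m y) (0 : 'cV_n)) by apply: mx_nonneg_col.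
have [w [w_ge0 w0 hw wc]] := perron_left_vector_pairing T_ge0 z_ge0 c_ge0 lam0 lam_rho hz.
have w1Py : lsubmx w *m P *m y = 0.
  by move: wc; rewrite -{1}[w]hsubmxK mul_row_col mulmx0 addr0 mulmxA.
have w1_ge0 : mx_nonneg (lsubmx w).
  by apply/mx_nonnegP => i j; rewrite mxE; have /mx_nonnegP := w_ge0; apply.
move: w0 hw; rewrite -[w]hsubmxK => /negP w0 hw; apply: w0; apply/eqP.
apply: companion_left_eigvec_eq0 hw; last exact: Py_eq0.
by rewrite gt_eqF // (lt_le_trans lam0).
Qed.

End CompanionBlock.

Section DoubleSplittings.
Variables (R : realType) (m n : nat).
Variables (A P1 R1 S1 P2 R2 S2 : 'M[R]_(m, n)) (Ad P1d P2d : 'M[R]_(n, m)).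
Hypotheses (A_MP : is_MP A Ad) (Ad_ge0 : mx_nonneg Ad).
Hypotheses (A_split1 : A = P1 - R1 + S1) (P1_null : forall x, in_null P1 x <-> in_null A x)
  (P1_MP : is_MP P1 P1d) (P1d_ge0 : mx_nonneg P1d)
  (X1_ge0 : mx_nonneg (P1d *m R1)) (Y1_le0 : mx_nonpos (P1d *m S1)).
Hypotheses (A_split2 : A = P2 - R2 + S2)
  (P2_range : forall y, in_range P2 y <-> in_range A y)
  (P2_null : forall x, in_null P2 x <-> in_null A x) (P2_MP : is_MP P2 P2d)
  (P2d_ge0 : mx_nonneg P2d) (R2_ge0 : mx_nonneg R2) (S2_le0 : mx_nonpos S2)
  (S2_range : forall y, in_range S2 y -> in_range P2 y).

Let T2 := block_mx (P2d *m R2) (- (P2d *m S2)) 1%:M 0.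
Let W12 := block_mx (P2d *m R2 - P2d *m S2 *m P1d *m R1) (P2d *m S2 *m P1d *m S1) 1%:M 0.
Definition pinvT_ones : 'cV[R]_m := Ad^T *m const_mx 1.

Lemma P2d_P2 : P2d *m P2 = Ad *m A.
Proof. exact: MP_mulmx_null. Qed.

Lemma P2_P2d : P2 *m P2d = A *m Ad.
Proof. exact: MP_mulmx_range. Qed.

Lemma P1d_P1 : P1d *m P1 = P2d *m P2.
Proof. by apply: MP_mulmx_null => // x; rewrite P1_null P2_null. Qed.

Lemma pinvT_ones_ge0 : mx_nonneg pinvT_ones.
Proof.
by apply: mx_nonneg_mul; [apply: mx_nonneg_tr | apply/mx_nonnegP => i j; rewrite mxE].
Qed.

Lemma A_Ad_pinvT_ones : A *m Ad *m pinvT_ones = pinvT_ones.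
Proof.
case: A_MP => _ AdAAd AAd_sym _.
by rewrite /pinvT_ones mulmxA -[in LHS]AAd_sym -trmx_mul mulmxA AdAAd.
Qed.

Lemma P2d_pinvT_ones_eq0 (u : 'rV[R]_n) :
  mx_nonneg u -> u *m P2d *m pinvT_ones = 0 -> u *m P2d = 0.
Proof.
move=> u_ge0 uy; case: A_MP => _ _ AAd_sym _; case: P2_MP => _ P2dP2P2d _ _.
have /mx_nonneg_rowsum_eq0 uAdT : mx_nonneg (u *m P2d *m Ad^T).
  by do 2?apply: mx_nonneg_mul => //; apply: mx_nonneg_tr.
have -> : u *m P2d = u *m P2d *m (A *m Ad)^T.
  by rewrite AAd_sym -P2_P2d !mulmxA -!(mulmxA u) P2dP2P2d.
by rewrite trmx_mul mulmxA uAdT ?mul0mx // -mulmxA.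
Qed.

Lemma Y2N_ge0 : mx_nonneg (- (P2d *m S2)).
Proof. by rewrite -mulmxN; apply: mx_nonneg_mul => //; apply: mx_nonposN. Qed.

Lemma T2_ge0 : mx_nonneg T2.
Proof.
apply: mx_nonneg_block; [exact: mx_nonneg_mul | exact: Y2N_ge0 | exact: mx_nonneg1 |].
exact: mx_nonneg0.
Qed.

Lemma W12_ge0 : mx_nonneg W12.
Proof.
have Y2_ge0 := Y2N_ge0.
apply: mx_nonneg_block; [| | exact: mx_nonneg1 | exact: mx_nonneg0].
- have -> : P2d *m R2 - P2d *m S2 *m P1d *m R1 = P2d *m R2 + - (P2d *m S2) *m (P1d *m R1).
    by rewrite mulNmx !mulmxA.
  by apply: mx_nonnegD; apply: mx_nonneg_mul.
- have -> : P2d *m S2 *m P1d *m S1 = - (P2d *m S2) *m - (P1d *m S1).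
    by rewrite mulNmx mulmxN opprK !mulmxA.
  by apply: mx_nonneg_mul => //; apply: mx_nonposN.
Qed.

Lemma spectral_radius_T2_lt1 : spectral_radius T2 < 1.
Proof.
set x := Ad *m pinvT_ones.
have P2dP2x : P2d *m P2 *m x = x by case: A_MP => _ AdAAd _ _; rewrite P2d_P2 mulmxA AdAAd.
have Ax : A *m x = pinvT_ones by rewrite mulmxA A_Ad_pinvT_ones.
have x_ge0 : mx_nonneg x by apply: mx_nonneg_mul Ad_ge0 pinvT_ones_ge0.
clearbody x.
have T2x : P2d *m R2 *m x - P2d *m S2 *m x = x - P2d *m pinvT_ones.
  have : P2d *m (A *m x) = x - P2d *m R2 *m x + P2d *m S2 *m x.
    by rewrite A_split2 mulmxDl mulmxBl !mulmxDr mulmxN !mulmxA P2dP2x.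
  by rewrite Ax => ->; rewrite opprD opprB addrCA addrA subrK.
have := @companion_spectral_radius_lt _ _ _ P2d R2 (- S2) pinvT_ones (col_mx x x) 1.
rewrite mulmxN; apply=> //; first exact: T2_ge0.
- exact: mx_nonneg_col.
- exact: mx_nonneg_mul pinvT_ones_ge0.
- exact: P2d_pinvT_ones_eq0.
rewrite companion_mul_col mulNmx T2x scale1r opp_col_mx add_col_mx oppr0 addr0.
by move=> i j; apply: lexx.
Qed.

Lemma spectral_radius_T2_le_T1 :
  mx_le (P2d *m R2) (P1d *m R1) -> mx_le (P1d *m S1) (P2d *m S2) ->
  spectral_radius T2 <= spectral_radius (block_mx (P1d *m R1) (- (P1d *m S1)) 1%:M 0).
Proof.
move=> /mx_leP R_cmp /mx_leP S_cmp; apply: spectral_radius_mono T2_ge0 _; apply/mx_leP.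
rewrite opp_block_mx add_block_mx subrr oppr0 addr0 opprK !(addrC (- _)).
by apply: mx_nonneg_block => //; apply: mx_nonneg0.
Qed.

Lemma P2_P2d_S2 : P2 *m P2d *m S2 = S2.
Proof. by case: P2_MP => P2P2dP2 _ _ _; apply: range_proj_id. Qed.

Lemma P2_P2d_R2 : P2 *m P2d *m R2 = R2.
Proof.
have -> : R2 = P2 + S2 - A by apply/matrixP => i j; rewrite A_split2 !mxE; ring.
case: P2_MP => P2P2dP2 _ _ _; case: A_MP => AAdA _ _ _.
by rewrite !mulmxDr mulmxN P2P2dP2 P2_P2d_S2 P2_P2d AAdA.
Qed.

Section Subinvariant.
Variables (y : 'cV[R]_m) (lam : R) (b : 'cV[R]_n).
Hypotheses (y_ge0 : mx_nonneg y) (A_Ad_y : A *m Ad *m y = y).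
Hypotheses (lam_gt0 : 0 < lam) (lam_le1 : lam <= 1) (b_ge0 : mx_nonneg b).
Hypothesis b_eq : lam ^+ 2 *: b - lam *: (P2d *m R2 *m b) + P2d *m S2 *m b = P2d *m y.

Lemma P2d_P2_b : P2d *m P2 *m b = b.
Proof.
have b_def : b = P2d *m (lam ^- 2 *: (y + lam *: (R2 *m b) - S2 *m b)).
  rewrite -scalemxAr !mulmxDr mulmxN -scalemxAr !mulmxA -b_eq.
  by rewrite addrAC addrK subrK scalerA mulVf ?scale1r // expf_neq0 // gt_eqF.
by case: P2_MP => _ P2dP2P2d _ _; rewrite [in LHS]b_def mulmxA P2dP2P2d -b_def.
Qed.

Lemma P2_b_eq : lam ^+ 2 *: (P2 *m b) - lam *: (R2 *m b) + S2 *m b = y.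
Proof.
set L := _ + S2 *m b.
have P2d_L : P2d *m L = P2d *m y.
  by rewrite /L !mulmxDr mulmxN -!scalemxAr !mulmxA P2d_P2_b b_eq.
have P2P2d_L : P2 *m P2d *m L = L.
  case: P2_MP => P2P2dP2 _ _ _.
  by rewrite /L !mulmxDr mulmxN -!scalemxAr !mulmxA P2P2dP2 P2_P2d_R2 P2_P2d_S2.
by rewrite -P2P2d_L -mulmxA P2d_L mulmxA P2_P2d A_Ad_y.
Qed.

Lemma A_b_ge0 : mx_nonneg (A *m b).
Proof.
have /mx_nonnegP Rb_ge0 : mx_nonneg (R2 *m b) by apply: mx_nonneg_mul.
have /mx_nonnegP Sb_ge0 : mx_nonneg (- (S2 *m b)).
  by rewrite -mulNmx; apply: mx_nonneg_mul => //; apply: mx_nonposN.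
have /mx_nonnegP := y_ge0; rewrite -P2_b_eq A_split2 mulmxDl mulmxBl.
move: (P2 *m b) (R2 *m b) (S2 *m b) Rb_ge0 Sb_ge0 => Pb Rb Sb Rb_ge0 Sb_ge0 yv_ge0.
apply/mx_nonnegP => i j; move: (yv_ge0 i j) (Rb_ge0 i j) (Sb_ge0 i j); rewrite !mxE.
move=> yv r_ge0 s_ge0; rewrite -(pmulr_rge0 _ (exprn_gt0 2 lam_gt0)).
have h1 : 0 <= lam * (1 - lam) * Rb i j by rewrite !mulr_ge0 ?subr_ge0 // ltW.
have h2 : 0 <= (1 - lam ^+ 2) * - Sb i j by rewrite mulr_ge0 // subr_ge0 expr_le1 // ltW.
lra.
Qed.

Lemma P1_defect_ge0 : mx_nonneg (b - lam *: (P1d *m R1 *m b) + P1d *m S1 *m b).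
Proof.
have : mx_nonneg (P1d *m (A *m b)) by apply: mx_nonneg_mul A_b_ge0.
rewrite A_split1 mulmxDl mulmxBl !mulmxDr mulmxN !mulmxA P1d_P1 P2d_P2_b.
have := mx_nonneg_mul X1_ge0 b_ge0.
move: (P1d *m R1 *m b) (P1d *m S1 *m b) => Xb Yb /mx_nonnegP Xb_ge0 /mx_nonnegP h.
apply/mx_nonnegP => i j; move: (h i j) (Xb_ge0 i j); rewrite !mxE => h1 h2.
have : 0 <= (1 - lam) * Xb i j by rewrite mulr_ge0 // subr_ge0.
lra.
Qed.

Lemma W12_subinvariant_col :
  mx_le (W12 *m col_mx (lam *: b) b) (lam *: col_mx (lam *: b) b - col_mx (P2d *m y) 0).
Proof.
apply/mx_leP; rewrite companion_mul_col scale_col_mx !(opp_col_mx, add_col_mx) subr0 subrr.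
apply: mx_nonneg_col; last exact: mx_nonneg0.
have -> : lam *: (lam *: b) - P2d *m y - ((P2d *m R2 - P2d *m S2 *m P1d *m R1) *m (lam *: b)
    + P2d *m S2 *m P1d *m S1 *m b)
    = - (P2d *m S2) *m (b - lam *: (P1d *m R1 *m b) + P1d *m S1 *m b).
  rewrite -b_eq mulmxBl -!scalemxAr mulNmx !mulmxDr mulmxN -!scalemxAr !mulmxA.
  move: (P2d *m R2 *m b) (P2d *m S2 *m P1d *m R1 *m b) (P2d *m S2 *m P1d *m S1 *m b).
  move: (P2d *m S2 *m b) => Yb Xb Ub Vb.
  by apply/matrixP => i j; rewrite !mxE; ring.
exact: mx_nonneg_mul Y2N_ge0 P1_defect_ge0.
Qed.

End Subinvariant.

Lemma W12_subinvariant lam : spectral_radius T2 < lam -> lam <= 1 ->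
  exists2 z, mx_nonneg z & mx_le (W12 *m z) (lam *: z - col_mx (P2d *m pinvT_ones) 0).
Proof.
move=> T2_lam lam_le1; have lam_gt0 := le_lt_trans (spectral_radius_ge0 _) T2_lam.
have c_ge0 : mx_nonneg (col_mx (P2d *m pinvT_ones) (0 : 'cV_n)).
  by apply: mx_nonneg_col; [exact: mx_nonneg_mul pinvT_ones_ge0 | exact: mx_nonneg0].
have /monotone_mxP[uT N_ge0] := resolvent_monotone T2_ge0 T2_lam.
pose z := invmx (lam%:M - T2) *m col_mx (P2d *m pinvT_ones) (0 : 'cV_n).
have z_ge0 : mx_nonneg z by apply: mx_nonneg_mul.
have : (lam%:M - T2) *m z = col_mx (P2d *m pinvT_ones) 0 by rewrite mulmxA mulmxV // mul1mx.
clearbody z; rewrite -[z]vsubmxK in z_ge0 *; set a := usubmx z; set b := dsubmx z.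
rewrite mulmxBl mul_scalar_mx companion_mul_col scale_col_mx opp_col_mx add_col_mx.
case/eq_col_mx => top /eqP; rewrite subr_eq0 => /eqP a_def.
have b_ge0 : mx_nonneg b.
  apply/mx_nonnegP => i j.
  by have /mx_nonnegP/(_ (rshift n i) j) := z_ge0; rewrite col_mxEd.
have b_eq : lam ^+ 2 *: b - lam *: (P2d *m R2 *m b) + P2d *m S2 *m b = P2d *m pinvT_ones.
  by rewrite -top -a_def scalerA -expr2 scalemxAr mulNmx opprD opprK addrA.
exists (col_mx (lam *: b) b); first by rewrite a_def.
exact: W12_subinvariant_col pinvT_ones_ge0 A_Ad_pinvT_ones lam_gt0 lam_le1 b_ge0 b_eq.
Qed.

Lemma spectral_radius_W12_le_T2 : spectral_radius W12 <= spectral_radius T2.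
Proof.
rewrite leNgt; apply/negP => T2_W12.
set lam := Num.min (spectral_radius W12) 1.
have T2_lam : spectral_radius T2 < lam by rewrite lt_min T2_W12 spectral_radius_T2_lt1.
have lam_gt0 := le_lt_trans (spectral_radius_ge0 _) T2_lam.
have [z z_ge0 hz] : exists2 z, mx_nonneg z &
    mx_le (W12 *m z) (lam *: z - col_mx (P2d *m pinvT_ones) 0).
  by apply: W12_subinvariant T2_lam _; rewrite ge_min lexx orbT.
have W12E :
    W12 = block_mx (P2d *m (R2 - S2 *m P1d *m R1)) (P2d *m (S2 *m P1d *m S1)) 1%:M 0.
  by rewrite mulmxBr !mulmxA.
suff : spectral_radius W12 < lam by rewrite ltNge ge_min lexx.
rewrite W12E; apply: (companion_spectral_radius_lt (z := z)); rewrite -?W12E //.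
- exact: W12_ge0.
- exact: mx_nonneg_mul pinvT_ones_ge0.
- exact: P2d_pinvT_ones_eq0.
Qed.

End DoubleSplittings.

Theorem theorem3p6 (R : realType) (m n : nat)
  (A P1 R1 S1 P2 R2 S2 : 'M[R]_(m, n))
  (Ad P1d P2d Ahatd : 'M[R]_(n, m)) :
  (* A is semi-monotone *)
  is_MP A Ad -> mx_nonneg Ad ->
  double_proper_weak_regular A P1 R1 S1 P1d ->
  double_proper_regular A P2 R2 S2 P2d ->
  (forall x, in_null P2 x -> in_null S2 x) ->
  (forall y, in_range S2 y -> in_range P2 y) ->
  ~ spectrum (S2 *m P1d) 1 ->
  is_MP ((1%:M - S2 *m P1d) *m A) Ahatd -> mx_nonneg Ahatd ->
  mx_le (P2d *m R2) (P1d *m R1) ->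
  mx_le (P1d *m S1) (P2d *m S2) ->
  let W12 := block_mx (P2d *m R2 - P2d *m S2 *m P1d *m R1)
                      (P2d *m S2 *m P1d *m S1) 1%:M 0 in
  let T1 := block_mx (P1d *m R1) (- (P1d *m S1)) 1%:M 0 in
  let T2 := block_mx (P2d *m R2) (- (P2d *m S2)) 1%:M 0 in
  spectral_radius W12 <= Num.min (spectral_radius T1) (spectral_radius T2)
  /\ Num.min (spectral_radius T1) (spectral_radius T2) < 1.
Proof.
move=> A_MP Ad_ge0 [[A_split1 _ P1_null] P1_MP P1d_ge0 X1_ge0 Y1_le0]
  [[A_split2 P2_range P2_null] P2_MP P2d_ge0 R2_ge0 S2_le0] _ S2_range _ _ _
  R_cmp S_cmp W12 T1 T2.
have T2_lt1 : spectral_radius T2 < 1 := spectral_radius_T2_lt1 A_MP Ad_ge0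
  A_split2 P2_range P2_null P2_MP P2d_ge0 R2_ge0 S2_le0.
have T2_le_T1 : spectral_radius T2 <= spectral_radius T1 :=
  spectral_radius_T2_le_T1 P2d_ge0 R2_ge0 S2_le0 R_cmp S_cmp.
have W12_le_T2 : spectral_radius W12 <= spectral_radius T2 :=
  spectral_radius_W12_le_T2 A_MP Ad_ge0 A_split1 P1_null P1_MP P1d_ge0 X1_ge0 Y1_le0
  A_split2 P2_range P2_null P2_MP P2d_ge0 R2_ge0 S2_le0 S2_range.
by rewrite (min_r T2_le_T1).
Qed.
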